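(* Let $Q(x,y)=\sum_{j=1}^{k}a_j x^{e_{j1}}y^{e_{j2}}$ with $a_j\in\mathbb{R}$ and $e_{j1},e_{j2}\in\mathbb{Z}$. Define $g_2(x,y)=-\frac12\big(Q(x,y)+Q(x^{-1},y^{-1})\big)$ and $\overline{g_2}(x,y)=1$ if $|g_2(x,y)|\ge1$, $\overline{g_2}(x,y)=0$ otherwise. For an integer $m\ge1$ set $$LC(W(x,x^m))=\frac{1}{2\pi}\int_0^{2\pi}\overline{g_2}(e^{it},e^{imt})\,dt,\qquad LC(W(x,y))=\frac{1}{(2\pi)^2}\int_0^{2\pi}\!\!\int_0^{2\pi}\overline{g_2}(e^{it_1},e^{it_2})\,dt_1\,dt_2.$$ Then $LC(W(x,x^m))\to LC(W(x,y))$ as $m\to\infty$.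
   Context: Motivation for notation: for $n$ larger than all $|e_{ji}|$, $W(x,y)=(xy)^n\big((xy)^n+(xy)^{-n}+Q(x,y)+Q(x^{-1},y^{-1})\big)$ is a polynomial, and $LC(W)$ generalises the limiting proportion of non-unimodular roots. On the torus $|x|=|y|=1$ the function $g_2$ is real-valued since the $a_j$ are real. *)

From Stdlib Require Import Reals Lra ZArith ClassicalEpsilon.
Open Scope R_scope.

Fixpoint fsum (k : nat) (f : nat -> R) : R :=
  match k with
  | O => 0
  | S k' => fsum k' f + f k'
  end.

(* g_2 on the torus, in angular coordinates x = e^{i t1}, y = e^{i t2}:
   -1/2 (Q(x,y) + Q(1/x,1/y)) = - sum_j a_j cos(e_{j1} t1 + e_{j2} t2). *)
Definition g2_torus (k : nat) (a : nat -> R) (e1 e2 : nat -> Z) (t1 t2 : R) : R :=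
  - fsum k (fun j => a j * cos (IZR (e1 j) * t1 + IZR (e2 j) * t2)).

Definition g2bar (k : nat) (a : nat -> R) (e1 e2 : nat -> Z) (t1 t2 : R) : R :=
  if Rle_dec 1 (Rabs (g2_torus k a e1 e2 t1 t2)) then 1 else 0.

(* Riemann integral of f over [lo,hi]; the value of RiemannInt is independent
   of the integrability proof (RiemannInt_P5).  Default 0 if not integrable. *)
Definition Rint (f : R -> R) (lo hi : R) : R :=
  epsilon (inhabits 0%R)
    (fun l => exists pr : Riemann_integrable f lo hi, RiemannInt pr = l).

Definition LC_curve (k : nat) (a : nat -> R) (e1 e2 : nat -> Z) (m : nat) : R :=
  / (2 * PI) * Rint (fun t => g2bar k a e1 e2 t (INR m * t)) 0 (2 * PI).

Definition LC_torus (k : nat) (a : nat -> R) (e1 e2 : nat -> Z) : R :=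
  / ((2 * PI) ^ 2) *
    Rint (fun t2 => Rint (fun t1 => g2bar k a e1 e2 t1 t2) 0 (2 * PI)) 0 (2 * PI).

From Stdlib Require Import Reals ZArith Lra Lia List.
From Stdlib Require Import Classical ClassicalEpsilon FunctionalExtensionality.
From mathcomp Require Import all_boot all_algebra.
From mathcomp Require Import Rstruct complex zify.
From Coquelicot Require Import Coquelicot.
Import GRing.Theory Num.Theory.
Open Scope R_scope.

(* For fixed s the indicator t |-> g2bar(t, s) is a step function on [0, 2 PI] with
   at most 4 D + 1 jumps, D = max |e_{j1}|: the equations g2(., s) = 1 and g2(., s) = -1
   are trigonometric polynomial equations of degree <= D, i.e. polynomial equations of
   degree <= 2 D in e^{it}, so they either hold identically or have at most 2 D roots.
   Cutting [0, 2 PI] into the m arcs on which m t runs once around the circle and using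
   periodicity in the second variable turns the curve integral into the integral over s
   of (1/m) sum_j g2bar((s + 2 PI j)/m, s).  This is a Riemann sum for the section
   integral of g2bar(., s), and since a jump of a step function spoils at most two
   cells, the error is O(1/m) uniformly in s.  Hence LC(W(x, x^m)) = LC(W(x, y)) + O(1/m). *)

Definition expi (t : R) : R[i] := Complex (cos t) (sin t).

Lemma ComplexM (a b c d : R) :
  (Complex a b * Complex c d)%R = Complex (a * c - b * d) (a * d + b * c).
Proof. by []. Qed.

Lemma ComplexD (a b c d : R) : (Complex a b + Complex c d)%R = Complex (a + c) (b + d).
Proof. by []. Qed.

Lemma expiD u v : (expi u * expi v)%R = expi (u + v).
Proof. by rewrite /expi ComplexM cos_plus sin_plus; f_equal; ring. Qed.

Lemma expiX t m : (expi t ^+ m)%R = expi (INR m * t).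
Proof.
elim: m => [|m IH]; first by rewrite expr0 /= Rmult_0_l /expi cos_0 sin_0.
by rewrite exprS IH expiD S_INR; f_equal; ring.
Qed.

Lemma expi_neq0 t : expi t != 0%R.
Proof.
apply/eqP => -[Hc Hs]; have := sin2_cos2 t.
by rewrite /Rsqr Hc Hs -?R0E; lra.
Qed.

Lemma expi_inj x y : 0 <= x < 2 * PI -> 0 <= y < 2 * PI -> expi x = expi y -> x = y.
Proof.
move=> Hx Hy [Hc Hs].
have Hsin : sin (x - y) = 0 by rewrite sin_minus Hc Hs; ring.
have Hcos : cos (x - y) = 1.
  by rewrite cos_minus Hc Hs; have := sin2_cos2 y; rewrite /Rsqr; lra.
have [z Hz] := sin_eq_0_0 _ Hsin.
have PIpos := PI_RGT_0.
have /lt_IZR Hz1 : -2 < IZR z by apply: (Rmult_lt_reg_r PI) => //; nra.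
have /lt_IZR Hz2 : IZR z < 2 by apply: (Rmult_lt_reg_r PI) => //; nra.
have [Ez|[Ez|Ez]] : z = Z.opp 1 \/ z = Z0 \/ z = Zpos xH by lia.
- by rewrite Hz Ez Ropp_mult_distr_l_reverse Rmult_1_l cos_neg cos_PI in Hcos; lra.
- by move: Hz; rewrite Ez Rmult_0_l; lra.
- by rewrite Hz Ez Rmult_1_l cos_PI in Hcos; lra.
Qed.

Lemma fsum_complex m (F : nat -> R) :
  (\sum_(j < m) Complex (F j) 0)%R = Complex (fsum m F) 0.
Proof.
elim: m => [|m IH]; first by rewrite big_ord0.
by rewrite big_ord_recr /= IH ComplexD Rplus_0_l.
Qed.

Lemma mem_In (T : eqType) (x : T) l : x \in l -> In x l.
Proof. by elim: l => // y l IH; rewrite inE => /orP [/eqP ->|/IH]; [left|right]. Qed.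

Lemma NoDup_uniq (T : eqType) (l : list T) : NoDup l -> uniq l.
Proof. by elim=> // x {}l Hx _ /= ->; rewrite andbT; apply/negP => /mem_In. Qed.

Lemma size_length (T : Type) (l : list T) : size l = length l.
Proof. by elim: l => //= x l ->. Qed.

Definition trig_poly k c (a th : nat -> R) (n : nat -> Z) (t : R) :=
  c + fsum k (fun j => a j * cos (IZR (n j) * t + th j)).

Section TrigPolyRoots.
Variables (k D : nat) (c : R) (a th : nat -> R) (n : nat -> Z).
Hypothesis n_le_D : forall j, (j < k)%N -> Z.le (Z.abs (n j)) (Z.of_nat D).

(* Multiplying by expi (D t) turns trig_poly into a complex polynomial in expi t. *)
Let monomial j : {poly R[i]} :=
  (Complex (a j / 2) 0 * expi (th j)) *: 'X^(Z.to_nat (Z.of_nat D + n j))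
  + (Complex (a j / 2) 0 * expi (- th j)) *: 'X^(Z.to_nat (Z.of_nat D - n j)).
Let P : {poly R[i]} := Complex c 0 *: 'X^D + \sum_(j < k) monomial j.

Let horner_monomial j t : (j < k)%N ->
  ((monomial j).[expi t])%R = (expi (INR D * t) * Complex (a j * cos (IZR (n j) * t + th j)) 0)%R.
Proof.
move=> /n_le_D Hj.
rewrite hornerD !hornerZ !hornerXn !expiX.
have -> : INR (Z.to_nat (Z.of_nat D + n j)) = INR D + IZR (n j).
  by rewrite INR_IZR_INZ Z2Nat.id ?plus_IZR -?INR_IZR_INZ //; lia.
have -> : INR (Z.to_nat (Z.of_nat D - n j)) = INR D - IZR (n j).
  by rewrite INR_IZR_INZ Z2Nat.id ?minus_IZR -?INR_IZR_INZ //; lia.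
rewrite -!mulrA !expiD.
set u := IZR (n j) * t + th j.
have -> : th j + (INR D + IZR (n j)) * t = INR D * t + u by rewrite /u; ring.
have -> : - th j + (INR D - IZR (n j)) * t = INR D * t - u by rewrite /u; ring.
rewrite /expi !ComplexM ComplexD cos_plus cos_minus sin_plus sin_minus.
by f_equal; rewrite -?R0E -?RmultE; field.
Qed.

Let horner_P t : (P.[expi t])%R = (expi (INR D * t) * Complex (trig_poly k c a th n t) 0)%R.
Proof.
rewrite hornerD hornerZ hornerXn expiX horner_sum.
rewrite (eq_bigr _ (fun (j : 'I_k) _ => horner_monomial j t (ltn_ord j))) -mulr_sumr.
rewrite (fsum_complex k (fun j => a j * cos (IZR (n j) * t + th j))).
by rewrite mulrC -mulrDr ComplexD Rplus_0_l.
Qed.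

Let size_P : (size P <= (2 * D).+1)%N.
Proof.
have size_XnZ (e : nat) (x : R[i]) : (e <= 2 * D)%N -> (size (x *: 'X^e)%R <= (2 * D).+1)%N.
  by move=> He; apply: leq_trans (size_scale_leq _ _) _; rewrite size_polyXn.
apply: leq_trans (size_polyD _ _) _; rewrite geq_max size_XnZ ?andTb; last lia.
apply: (big_ind (fun q : {poly R[i]} => size q <= (2 * D).+1)%N).
- by rewrite size_poly0.
- by move=> p q Hp Hq; apply: leq_trans (size_polyD _ _) _; rewrite geq_max Hp Hq.
- move=> j _; have := n_le_D j (ltn_ord j) => Hj.
  by apply: leq_trans (size_polyD _ _) _; rewrite geq_max !size_XnZ //; lia.
Qed.

Lemma trig_poly_roots :
  (forall t, trig_poly k c a th n t = 0) \/
  forall l, NoDup l -> (forall x, In x l -> 0 <= x < 2 * PI /\ trig_poly k c a th n x = 0) ->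
    (length l <= 2 * D)%coq_nat.
Proof.
have [P0|P_neq0] := eqVneq P 0%R.
  left => t; have := horner_P t; rewrite P0 horner0 => /esym/eqP.
  by rewrite mulf_eq0 (negbTE (expi_neq0 _)) => /eqP [->].
right => l Hl Hroots.
have Hroot : all (root P) (map expi l).
  apply/allP => _ /mapP [x /mem_In /Hroots [_ Hx] ->].
  by rewrite /root horner_P Hx -R0E mulr0.
have Huniq : uniq (map expi l).
  rewrite map_inj_in_uniq; first exact: NoDup_uniq.
  by move=> x y /mem_In /Hroots [Hx _] /mem_In /Hroots [Hy _]; apply: expi_inj.
have := leq_trans (max_poly_roots P_neq0 Hroot Huniq) size_P.
by rewrite size_map ltnS -size_length => /leP.
Qed.

End TrigPolyRoots.

Lemma exhaustive_list_of_NoDup_bound (T : Type) (P : T -> Prop) N :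
  (forall l, NoDup l -> (forall x, In x l -> P x) -> (length l <= N)%coq_nat) ->
  exists l, (length l <= N)%coq_nat /\ forall x, P x -> In x l.
Proof.
move=> HN.
have grow l : NoDup l -> (forall x, In x l -> P x) ->
    (forall x, P x -> In x l) \/
    exists x, NoDup (x :: l) /\ forall y, In y (x :: l) -> P y.
  move=> Hl HP; have [|Hmiss] := classic (forall x, P x -> In x l); first by left.
  right; have [x Hx] := not_all_ex_not _ _ Hmiss; have [Px Nx] := imply_to_and _ _ Hx.
  by exists x; split; [constructor | move=> y [<-|/HP]].
suff : forall d l, NoDup l -> (forall x, In x l -> P x) -> (N - length l <= d)%coq_nat ->
    exists l', (length l' <= N)%coq_nat /\ forall x, P x -> In x l'.
  by move=> H; apply: (H N nil); [constructor | move=> x [] | lia].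
elim=> [|d IH] l Hl HP Hd;
  (have [Hall|[x [Hxl HPxl]]] := grow l Hl HP; first by exists l; split => //; apply: HN).
- by have /= := HN _ Hxl HPxl; lia.
- by apply: (IH (x :: l)) => //=; lia.
Qed.

Lemma trig_poly_zeros_listed k D c a th n :
  (forall j, (j < k)%N -> Z.le (Z.abs (n j)) (Z.of_nat D)) ->
  (forall t, trig_poly k c a th n t = 0) \/
  exists l, (length l <= 2 * D)%coq_nat /\
    forall x, 0 <= x < 2 * PI -> trig_poly k c a th n x = 0 -> In x l.
Proof.
move=> Hn; have [Hall|Hbound] := trig_poly_roots k D c a th n Hn; first by left.
right; have [l [Hl Hin]] := exhaustive_list_of_NoDup_bound _ _ _ Hbound.
by exists l; split => // x Hx Hx0; apply: Hin.
Qed.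

Lemma fsum_ext k f g : (forall j, (j < k)%coq_nat -> f j = g j) -> fsum k f = fsum k g.
Proof.
elim: k => [//|k IH] H /=.
rewrite IH; last by move=> j Hj; apply: H; lia.
by rewrite H //; lia.
Qed.

Lemma fsum_0 k : fsum k (fun _ => 0) = 0.
Proof. by elim: k => [|k IH] /=; [|rewrite IH]; ring. Qed.

Lemma fsum_add k f g : fsum k (fun j => f j + g j) = fsum k f + fsum k g.
Proof. by elim: k => [|k IH] /=; [|rewrite IH]; ring. Qed.

Lemma fsum_sub k f g : fsum k (fun j => f j - g j) = fsum k f - fsum k g.
Proof. by elim: k => [|k IH] /=; [|rewrite IH]; ring. Qed.

Lemma fsum_scal k c f : fsum k (fun j => c * f j) = c * fsum k f.
Proof. by elim: k => [|k IH] /=; [|rewrite IH]; ring. Qed.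

Lemma fsum_le k f g : (forall j, (j < k)%coq_nat -> f j <= g j) -> fsum k f <= fsum k g.
Proof.
elim: k => [|k IH] H /=; first lra.
have := H k (Nat.lt_succ_diag_r k).
have : fsum k f <= fsum k g by apply: IH => j Hj; apply: H; lia.
lra.
Qed.

Lemma Rabs_fsum_le k f : Rabs (fsum k f) <= fsum k (fun j => Rabs (f j)).
Proof.
elim: k => [|k IH] /=; first by rewrite Rabs_R0; lra.
by apply: Rle_trans (Rabs_triang _ _) _; lra.
Qed.

Fixpoint lsum (Z : list R) (F : R -> R) : R :=
  match Z with nil => 0 | z :: Z' => F z + lsum Z' F end.

Lemma lsum_ge0 Z F : (forall z, 0 <= F z) -> 0 <= lsum Z F.
Proof. by move=> H; elim: Z => [|z Z IH] /=; [lra | have := H z; lra]. Qed.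

Lemma lsum_ge_term Z F z : (forall w, 0 <= F w) -> In z Z -> F z <= lsum Z F.
Proof.
move=> H; elim: Z => [//|w Z IH] /= [->|Hz].
- by have := lsum_ge0 Z F H; lra.
- by have := IH Hz; have := H w; lra.
Qed.

Lemma lsum_le Z F c : (forall z, F z <= c) -> lsum Z F <= c * INR (length Z).
Proof.
move=> H; elim: Z => [|z Z IH]; first by rewrite /=; lra.
by rewrite [length _]/= S_INR /=; have := H z; lra.
Qed.

Lemma fsum_lsum k Z (G : nat -> R -> R) :
  fsum k (fun j => lsum Z (G j)) = lsum Z (fun z => fsum k (fun j => G j z)).
Proof. by elim: Z => [|z Z IH] /=; [exact: fsum_0 | rewrite fsum_add IH]. Qed.

Definition piecewise_constant (phi : R -> R) (Z : list R) (A B : R) :=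
  forall x y, A <= x -> x <= y -> y <= B -> (forall z, In z Z -> ~ x <= z <= y) ->
    phi x = phi y.

Lemma piecewise_constant_sub phi Z A B A' B' :
  A <= A' -> B' <= B -> piecewise_constant phi Z A B -> piecewise_constant phi Z A' B'.
Proof. by move=> HA HB H x y Hx Hxy Hy; apply: H; lra. Qed.

Lemma ex_RInt_sub (f : R -> R) a b x y :
  a <= x -> x <= y -> y <= b -> ex_RInt f a b -> ex_RInt f x y.
Proof.
move=> Hax Hxy Hyb H; apply: (ex_RInt_Chasles_2 _ a); first lra.
by apply: (ex_RInt_Chasles_1 _ _ _ b); first lra.
Qed.

Lemma ex_RInt_piecewise_constant_open (phi : R -> R) Z A B : A <= B ->
  (forall x y, A < x -> x <= y -> y < B -> (forall z, In z Z -> ~ x <= z <= y) ->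
    phi x = phi y) ->
  ex_RInt phi A B.
Proof.
elim: Z A B => [|z Z IH] A B HAB H.
- have [<-|HAB'] := Req_dec A B; first exact: ex_RInt_point.
  apply: (ex_RInt_ext (fun _ => phi ((A + B) / 2))); last exact: ex_RInt_const.
  rewrite Rmin_left // Rmax_right // => x Hx.
  by case: (Rle_dec x ((A + B) / 2)) => Hxm; [symmetry|]; apply: H => //; lra.
- case: (classic (A < z < B)) => Hz; last first.
    apply: IH => // x y Hx Hxy Hy Hn; apply: H => // w [<-|/Hn //]; lra.
  apply: (ex_RInt_Chasles _ _ z); apply: IH => [|x y Hx Hxy Hy Hn]; try lra;
    apply: H => //; try lra; move=> w [<-|/Hn //]; lra.
Qed.

Lemma ex_RInt_piecewise_constant phi Z A B :
  A <= B -> piecewise_constant phi Z A B -> ex_RInt phi A B.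
Proof.
move=> HAB H; apply: (ex_RInt_piecewise_constant_open _ Z) => // x y *.
by apply: H => //; lra.
Qed.

Definition interval_indicator (u v z : R) : R :=
  if Rle_dec u z then if Rle_dec z v then 1 else 0 else 0.

Lemma interval_indicator_ge0 u v z : 0 <= interval_indicator u v z.
Proof. by rewrite /interval_indicator; case: Rle_dec => _ /=; [case: Rle_dec => _ /=|]; lra. Qed.

Lemma grid_cells_containing_le2 h z m : 0 < h ->
  fsum m (fun j => interval_indicator (INR j * h) (INR (S j) * h) z) <= 2.
Proof.
move=> Hh; set F := fun j => _.
suff : 0 <= fsum m F <= 2 /\ (INR m * h <= z -> fsum m F <= 1) /\ (INR m * h < z -> fsum m F = 0).
  by move=> [[_ H2] _].
elim: m => [|m [Hc [Hle1 H0]]]; first by rewrite /=; lra.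
have -> : fsum (S m) F = fsum m F + F m by [].
have -> : F m = interval_indicator (INR m * h) ((INR m + 1) * h) z by rewrite /F S_INR.
rewrite /interval_indicator S_INR.
case: (Rle_dec (INR m * h) z) => Hz1; case: (Rle_dec z ((INR m + 1) * h)) => Hz2 /=;
  (split; [|split] => [|Hz|Hz]); try lra.
all: by have := H0 ltac:(lra); lra.
Qed.

Lemma RInt_const_R (a b c : R) : RInt (fun _ => c) a b = (b - a) * c.
Proof. exact: RInt_const. Qed.

Lemma RInt_cell_error phi Z u v t : u <= t <= v -> (forall x, 0 <= phi x <= 1) ->
  piecewise_constant phi Z u v ->
  Rabs (RInt phi u v - (v - u) * phi t) <= (v - u) * lsum Z (interval_indicator u v).
Proof.
move=> Ht H01 Hpc.
have Hint : ex_RInt phi u v by apply: (ex_RInt_piecewise_constant _ Z) => //; lra.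
have [[z [Hz Hzuv]]|Hnone] := classic (exists z, In z Z /\ u <= z <= v).
- have Hcount : 1 <= lsum Z (interval_indicator u v).
    have -> : 1 = interval_indicator u v z.
      by rewrite /interval_indicator; do 2?case: Rle_dec => /= ?; lra.
    exact: lsum_ge_term (interval_indicator_ge0 u v) Hz.
  have Hlo : (v - u) * 0 <= RInt phi u v.
    by rewrite -RInt_const_R; apply: RInt_le => //; [lra|exact: ex_RInt_const|move=> x _; case: (H01 x)].
  have Hhi : RInt phi u v <= (v - u) * 1.
    by rewrite -RInt_const_R; apply: RInt_le => //; [lra|exact: ex_RInt_const|move=> x _; case: (H01 x)].
  by have Hphi := H01 t; apply: Rabs_le; nra.
- have -> : RInt phi u v = (v - u) * phi t.
    rewrite -[RHS]RInt_const_R; apply: RInt_ext; rewrite Rmin_left ?Rmax_right; try lra.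
    move=> x Hx; have Hout w : In w Z -> x <= w <= t \/ t <= w <= x -> False.
      by move=> Hw Hwx; apply: Hnone; exists w; split => //; lra.
    case: (Rle_dec x t) => Hxt; [|symmetry]; apply: Hpc; try lra;
      by move=> w Hw Hwx; apply: (Hout w Hw); lra.
  rewrite Rminus_diag Rabs_R0; apply: Rmult_le_pos; first lra.
  exact: lsum_ge0 (interval_indicator_ge0 u v).
Qed.

Lemma RInt_grid (g : R -> R) h m : 0 <= h -> ex_RInt g 0 (INR m * h) ->
  RInt g 0 (INR m * h) = fsum m (fun j => RInt g (INR j * h) (INR (S j) * h)).
Proof.
move=> Hh; elim: m => [|m IH] Hint; first by rewrite /= Rmult_0_l RInt_point.
have Hm : 0 <= INR m * h by apply: Rmult_le_pos; [exact: pos_INR|].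
have HmS : INR m * h <= INR (S m) * h by rewrite S_INR; lra.
have Hsub x y : 0 <= x -> x <= y -> y <= INR (S m) * h -> ex_RInt g x y.
  by move=> *; apply: (ex_RInt_sub _ 0 (INR (S m) * h)).
rewrite -(RInt_Chasles g 0 (INR m * h)) ?IH //; apply: Hsub => //; lra.
Qed.

Lemma Riemann_sum_error phi Z m h (tau : nat -> R) : 0 < h ->
  (forall x, 0 <= phi x <= 1) -> piecewise_constant phi Z 0 (INR m * h) ->
  (forall j, INR j * h <= tau j <= INR (S j) * h) ->
  Rabs (RInt phi 0 (INR m * h) - h * fsum m (fun j => phi (tau j)))
    <= 2 * h * INR (length Z).
Proof.
move=> Hh H01 Hpc Htau.
have Hmh : 0 <= INR m * h by apply: Rmult_le_pos; [exact: pos_INR | lra].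
have Hcell j : (j < m)%coq_nat -> INR j * h <= INR (S j) * h <= INR m * h /\ 0 <= INR j * h.
  move=> Hj; split; last by apply: Rmult_le_pos; [exact: pos_INR | lra].
  by split; [rewrite S_INR; lra | apply: Rmult_le_compat_r; [lra | apply: le_INR; lia]].
rewrite RInt_grid; [|lra|exact: ex_RInt_piecewise_constant Hpc].
rewrite -fsum_scal -fsum_sub; apply: Rle_trans (Rabs_fsum_le _ _) _.
apply: (Rle_trans _ (fsum m (fun j => h * lsum Z (interval_indicator (INR j * h) (INR (S j) * h))))).
  apply: fsum_le => j /Hcell [[Hj1 Hj2] Hj0].
  have Hw : INR (S j) * h - INR j * h = h by rewrite S_INR; ring.
  have := RInt_cell_error phi Z (INR j * h) (INR (S j) * h) (tau j) (Htau j) H01.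
  by rewrite Hw; apply; apply: piecewise_constant_sub Hpc; lra.
rewrite fsum_scal fsum_lsum.
suff : lsum Z (fun z => fsum m (fun j => interval_indicator (INR j * h) (INR (S j) * h) z))
    <= 2 * INR (length Z) by nra.
by apply: lsum_le => z; apply: grid_cells_containing_le2.
Qed.

Definition ge1_indicator (g : R -> R) (t : R) : R :=
  match Rle_dec 1 (Rabs (g t)) with left _ => 1 | right _ => 0 end.

Lemma ge1_indicator_01 g t : 0 <= ge1_indicator g t <= 1.
Proof. by rewrite /ge1_indicator; case: Rle_dec => /= _; lra. Qed.

Lemma piecewise_constant_ge1_indicator (g : R -> R) Z A B : continuity g ->
  (forall t, A <= t <= B -> Rabs (g t) = 1 -> In t Z) ->
  piecewise_constant (ge1_indicator g) Z A B.
Proof.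
move=> Hg HZ x y Hx Hxy Hy Hn.
have Hc : continuity (fun t => Rabs (g t) - 1).
  apply: continuity_minus; last exact: continuity_const.
  exact: continuity_comp Hg Rcontinuity_abs.
suff crossing : (Rabs (g x) - 1) * (Rabs (g y) - 1) <= 0 -> False.
  rewrite /ge1_indicator; case: Rle_dec => H1; case: Rle_dec => H2 //;
    by exfalso; apply: crossing; nra.
move=> Hsign; have [z [Hz Hgz]] := IVT_cor _ x y Hc Hxy Hsign.
by apply: (Hn z _ Hz); apply: HZ; lra.
Qed.

Lemma continuity_trig_sum k (a al be : nat -> R) :
  continuity (fun t => fsum k (fun j => a j * cos (al j * t + be j))).
Proof.
elim: k => [|k IH] /=; first exact: continuity_const.
by apply: continuity_plus => // x; reg.
Qed.

Lemma trig_ge1_indicator_piecewise_constant k D (a th : nat -> R) (n : nat -> Z) :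
  (forall j, (j < k)%N -> Z.le (Z.abs (n j)) (Z.of_nat D)) ->
  exists Z, (length Z <= 4 * D + 1)%coq_nat /\
    piecewise_constant
      (ge1_indicator (fun t => - fsum k (fun j => a j * cos (IZR (n j) * t + th j))))
      Z 0 (2 * PI).
Proof.
move=> Hn; set g := fun t => - fsum k (fun j => a j * cos (IZR (n j) * t + th j)).
have g_eq c t : trig_poly k c a th n t = c - g t by rewrite /trig_poly /g; ring.
have constant_ind (c : R) : (forall t, g t = c) ->
    exists Z, (length Z <= 4 * D + 1)%coq_nat /\ piecewise_constant (ge1_indicator g) Z 0 (2 * PI).
  by move=> Hc; exists nil; split => [/=|x y *]; [lia | rewrite /ge1_indicator !Hc].
have [H1|[lp [Hlp Hinp]]] := trig_poly_zeros_listed k D 1 a th n Hn.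
  by apply: (constant_ind 1) => t; have := H1 t; rewrite g_eq; lra.
have [H2|[lm [Hlm Hinm]]] := trig_poly_zeros_listed k D (-1) a th n Hn.
  by apply: (constant_ind (-1)) => t; have := H2 t; rewrite g_eq; lra.
(* The listed zeros lie in [0, 2 PI), so the endpoint 2 PI is added by hand. *)
exists (2 * PI :: lp ++ lm); split; first by rewrite /= length_app; lia.
apply: piecewise_constant_ge1_indicator.
  by apply: continuity_opp; apply: (continuity_trig_sum k a (fun j => IZR (n j))).
move=> t Ht Hgt; have [->|Ht2] := Req_dec t (2 * PI); first by left.
right; apply: in_or_app.
have [Hs|Hs] := Rcase_abs (g t).
- by rewrite Rabs_left // in Hgt; right; apply: Hinm; [lra | rewrite g_eq; lra].
- by rewrite Rabs_right // in Hgt; left; apply: Hinp; [lra | rewrite g_eq; lra].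
Qed.

Lemma Rint_RInt f a b : ex_RInt f a b -> Rint f a b = RInt f a b.
Proof.
move=> H; rewrite /Rint; have pr := ex_RInt_Reals_0 _ _ _ H.
have Ex : exists l, exists pr : Riemann_integrable f a b, RiemannInt pr = l.
  by exists (RiemannInt pr); exists pr.
by have [pr' <-] := epsilon_spec (inhabits 0) _ Ex; rewrite (RInt_Reals f a b pr').
Qed.

Lemma RInt_fsum m (F : nat -> R -> R) a b :
  (forall j, (j < m)%coq_nat -> ex_RInt (F j) a b) ->
  ex_RInt (fun y => fsum m (fun j => F j y)) a b /\
  RInt (fun y => fsum m (fun j => F j y)) a b = fsum m (fun j => RInt (F j) a b).
Proof.
elim: m => [|m IH] H /=; first by split; [exact: ex_RInt_const | rewrite RInt_const_R; ring].
have [H1 H2] := IH (fun j Hj => H j ltac:(lia)).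
have H3 := H m ltac:(lia).
by split; [exact: ex_RInt_plus | rewrite -H2; exact: RInt_plus].
Qed.

Lemma RInt_grid_cell_rescale (g : R -> R) L m j : (0 < m)%coq_nat ->
  ex_RInt g (INR j * (L / INR m)) (INR (S j) * (L / INR m)) ->
  ex_RInt (fun y => g ((y + L * INR j) / INR m)) 0 L /\
  RInt g (INR j * (L / INR m)) (INR (S j) * (L / INR m))
    = / INR m * RInt (fun y => g ((y + L * INR j) / INR m)) 0 L.
Proof.
move=> /lt_0_INR Hm Hg.
have Eaff y : / INR m * y + INR j * (L / INR m) = (y + L * INR j) / INR m by field; lra.
have E0 : / INR m * 0 + INR j * (L / INR m) = INR j * (L / INR m) by ring.
have EL : / INR m * L + INR j * (L / INR m) = INR (S j) * (L / INR m).
  by rewrite S_INR; field; lra.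
rewrite -E0 -EL in Hg.
have Hex := ex_RInt_comp_lin g (/ INR m) (INR j * (L / INR m)) 0 L Hg.
have HRInt := RInt_comp_lin g (/ INR m) (INR j * (L / INR m)) 0 L Hg.
rewrite E0 EL in HRInt.
have Hscal y : scal (/ INR m) (g (/ INR m * y + INR j * (L / INR m)))
    = / INR m * g ((y + L * INR j) / INR m) by rewrite Eaff.
have Hresc : ex_RInt (fun y => g ((y + L * INR j) / INR m)) 0 L.
  have := ex_RInt_scal _ 0 L (INR m) Hex; apply: ex_RInt_ext => y _.
  by rewrite Hscal /scal /= /mult /= -Rmult_assoc Rinv_r ?Rmult_1_l //; lra.
split => //; rewrite -HRInt (RInt_ext _ (fun y => scal (/ INR m) (g ((y + L * INR j) / INR m)))).
  by rewrite RInt_scal.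
by move=> y _; rewrite Hscal.
Qed.

Lemma cos_period_Z x (z : Z) : cos (x + 2 * IZR z * PI) = cos x.
Proof.
have [Hz|Hz] := Z_le_gt_dec 0 z.
  by rewrite -(Z2Nat.id z Hz) -INR_IZR_INZ cos_period.
rewrite -(cos_period _ (Z.to_nat (- z))) INR_IZR_INZ Z2Nat.id ?opp_IZR; last lia.
by f_equal; ring.
Qed.

Lemma Z_abs_bounded k (n : nat -> Z) :
  exists D : nat, forall j, (j < k)%N -> Z.le (Z.abs (n j)) (Z.of_nat D).
Proof.
elim: k => [|k [D HD]]; first by exists 0%N.
exists (Nat.max D (Z.to_nat (Z.abs (n k)))) => j Hj.
case: (ltngtP j k) => Hjk; [have := HD j Hjk; lia | move: Hj Hjk; lia | subst; lia].
Qed.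

Lemma eventually_div_INR_lt C eps : 0 < eps ->
  exists N, forall n, (N <= n)%coq_nat -> C / INR (S n) < eps.
Proof.
move=> Heps; have [N HN] := INR_archimed eps C Heps; exists N => n Hn.
have HSn : INR N < INR (S n) by apply: lt_INR; lia.
have HN0 : 0 <= INR N by exact: pos_INR.
by apply: (Rmult_lt_reg_r (INR (S n))); [lra | rewrite /Rdiv Rmult_assoc Rinv_l; nra].
Qed.

Lemma ex_RInt_uniform_limit (F : R -> R) (Fn : nat -> R -> R) a b : a <= b ->
  (forall n, ex_RInt (Fn n) a b) ->
  (forall eps, 0 < eps -> exists N, forall n t, (N <= n)%coq_nat -> a <= t <= b ->
     Rabs (Fn n t - F t) < eps) ->
  ex_RInt F a b.
Proof.
move=> Hab Hint Hunif.
(* filterlim_RInt needs uniform convergence on all of R: use F itself outside [a, b]. *)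
pose Gn n t := if Rle_dec a t then if Rle_dec t b then Fn n t else F t else F t.
have HG n : is_RInt (Gn n) a b (RInt (Gn n) a b).
  apply: RInt_correct; apply: ex_RInt_ext (Hint n).
  rewrite Rmin_left ?Rmax_right // => t Ht.
  by rewrite /Gn; case: Rle_dec => Ha /=; [case: Rle_dec => Hb /=|]; lra.
have Hlim : filterlim Gn eventually (locally F).
  apply/filterlim_locally => eps; have [N HN] := Hunif eps (cond_pos eps).
  exists N => n Hn t; rewrite /ball /= /fct_ball /ball /= /AbsRing_ball /abs /minus /plus /opp /=.
  rewrite /Gn; case: Rle_dec => Ha /=; [case: Rle_dec => Hb /=|];
    try by rewrite Rplus_opp_r Rabs_R0; exact: cond_pos.
  by apply: HN => //; lra.
have [I [_ HI]] := filterlim_RInt Gn a b eventually _ F _ HG Hlim.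
by exists I.
Qed.

Section G2bar.
Variables (k : nat) (a : nat -> R) (e1 e2 : nat -> Z).
Local Notation f := (g2bar k a e1 e2).

Lemma g2bar_01 t1 t2 : 0 <= f t1 t2 <= 1.
Proof. exact: (ge1_indicator_01 (fun t => g2_torus k a e1 e2 t t2)). Qed.

Lemma g2bar_periodic_r t1 t2 (j : nat) : f t1 (t2 + 2 * PI * INR j) = f t1 t2.
Proof.
rewrite /g2bar; suff -> : g2_torus k a e1 e2 t1 (t2 + 2 * PI * INR j) = g2_torus k a e1 e2 t1 t2 by [].
rewrite /g2_torus; f_equal; apply: fsum_ext => i _; f_equal.
rewrite -[RHS](cos_period_Z _ (Z.mul (e2 i) (Z.of_nat j))) mult_IZR -INR_IZR_INZ; f_equal; ring.
Qed.

Lemma g2bar_section_piecewise_constant : exists D : nat, forall s,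
  exists Z, (length Z <= 4 * D + 1)%coq_nat /\ piecewise_constant (fun t => f t s) Z 0 (2 * PI).
Proof.
have [D HD] := Z_abs_bounded k e1; exists D => s.
exact: trig_ge1_indicator_piecewise_constant k D a (fun j => IZR (e2 j) * s) e1 HD.
Qed.

Lemma ex_RInt_g2bar_section s : ex_RInt (fun t => f t s) 0 (2 * PI).
Proof.
have [D HD] := g2bar_section_piecewise_constant; have [Z [_ HZ]] := HD s.
by apply: (ex_RInt_piecewise_constant _ Z) => //; have := PI_RGT_0; lra.
Qed.

Lemma ex_RInt_g2bar_curve m : ex_RInt (fun t => f t (INR m * t)) 0 (2 * PI).
Proof.
set n := fun j => Z.add (e1 j) (Z.mul (Z.of_nat m) (e2 j)).
have [D HD] := Z_abs_bounded k n.
have [Z [_ HZ]] := trig_ge1_indicator_piecewise_constant k D a (fun _ => 0) n HD.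
have Hcurve t : g2_torus k a e1 e2 t (INR m * t)
    = - fsum k (fun j => a j * cos (IZR (n j) * t + 0)).
  rewrite /g2_torus; f_equal; apply: fsum_ext => j _; do 2 f_equal.
  by rewrite /n plus_IZR mult_IZR -INR_IZR_INZ; ring.
apply: (ex_RInt_piecewise_constant _ Z); first by have := PI_RGT_0; lra.
by move=> x y Hx Hxy Hy Hn; rewrite /g2bar !Hcurve; apply: HZ.
Qed.

(* Average of f over the m points t of [0, 2 PI) with m t = y modulo 2 PI. *)
Definition fiber_mean (m : nat) (y : R) : R :=
  / INR m * fsum m (fun j => f ((y + 2 * PI * INR j) / INR m) y).

Definition section_integral (s : R) : R := RInt (fun t => f t s) 0 (2 * PI).

Lemma RInt_g2bar_curve m : (0 < m)%coq_nat ->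
  ex_RInt (fiber_mean m) 0 (2 * PI) /\
  RInt (fun t => f t (INR m * t)) 0 (2 * PI) = RInt (fiber_mean m) 0 (2 * PI).
Proof.
move=> Hm; have HmR : 0 < INR m by exact: lt_0_INR.
have PIpos := PI_RGT_0.
set h := 2 * PI / INR m.
have Hh : 0 <= h by apply: Rlt_le; apply: Rdiv_lt_0_compat; lra.
have HT : 2 * PI = INR m * h by rewrite /h; field; lra.
set psi := fun j y => f ((y + 2 * PI * INR j) / INR m) y.
have Hcurve := ex_RInt_g2bar_curve m.
have Hcell j : (j < m)%coq_nat ->
    ex_RInt (psi j) 0 (2 * PI) /\
    RInt (fun t => f t (INR m * t)) (INR j * h) (INR (S j) * h) = / INR m * RInt (psi j) 0 (2 * PI).
  move=> Hj.
  have -> : psi j = fun y => f ((y + 2 * PI * INR j) / INR m) (INR m * ((y + 2 * PI * INR j) / INR m)).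
    apply: functional_extensionality => y.
    have -> : INR m * ((y + 2 * PI * INR j) / INR m) = y + 2 * PI * INR j by field; lra.
    by rewrite g2bar_periodic_r.
  apply: RInt_grid_cell_rescale => //; rewrite -/h; apply: (ex_RInt_sub _ 0 (2 * PI)) => //.
  - by apply: Rmult_le_pos; [exact: pos_INR |].
  - by rewrite S_INR Rmult_plus_distr_r; lra.
  - by rewrite [in X in _ <= X]HT; apply: Rmult_le_compat_r => //; apply: le_INR; lia.
have [Hsum_ex Hsum] := RInt_fsum m psi 0 (2 * PI) (fun j Hj => proj1 (Hcell j Hj)).
have Hmean : ex_RInt (fiber_mean m) 0 (2 * PI) by exact: ex_RInt_scal Hsum_ex.
split => //.
rewrite [in X in RInt _ _ X = _]HT RInt_grid //; last by rewrite -HT.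
rewrite (fsum_ext m _ (fun j => / INR m * RInt (psi j) 0 (2 * PI))); last by move=> j /Hcell [].
by rewrite fsum_scal -Hsum /fiber_mean (RInt_scal _ _ _ (/ INR m) Hsum_ex).
Qed.

Lemma section_integral_fiber_mean_error : exists C, forall m s, (0 < m)%coq_nat ->
  0 <= s <= 2 * PI -> Rabs (section_integral s - 2 * PI * fiber_mean m s) <= C / INR m.
Proof.
have [D HD] := g2bar_section_piecewise_constant.
exists (2 * (2 * PI) * INR (4 * D + 1)) => m s Hm Hs.
have HmR : 0 < INR m by exact: lt_0_INR.
have PIpos := PI_RGT_0.
set h := 2 * PI / INR m.
have Hh : 0 < h by apply: Rdiv_lt_0_compat; lra.
have HT : 2 * PI = INR m * h by rewrite /h; field; lra.
have [Z [HZlen HZ]] := HD s.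
have -> : 2 * PI * fiber_mean m s = h * fsum m (fun j => f ((s + 2 * PI * INR j) / INR m) s).
  by rewrite /fiber_mean /h; field; lra.
rewrite /section_integral [in X in RInt _ _ X]HT.
rewrite [in X in piecewise_constant _ _ _ X]HT in HZ.
apply: Rle_trans (Riemann_sum_error _ Z m h _ Hh (fun x => g2bar_01 x s) HZ _) _.
  move=> j; rewrite S_INR /h; split; apply: (Rmult_le_reg_r (INR m)) => //;
    field_simplify; nra.
have Hlen : INR (length Z) <= INR (4 * D + 1) by exact: le_INR.
have -> : 2 * (2 * PI) * INR (4 * D + 1) / INR m = 2 * h * INR (4 * D + 1).
  by rewrite /h; field; lra.
by apply: Rmult_le_compat_l => //; lra.
Qed.

Lemma ex_RInt_section_integral : ex_RInt section_integral 0 (2 * PI).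
Proof.
have [C HC] := section_integral_fiber_mean_error.
apply: (ex_RInt_uniform_limit _ (fun n s => 2 * PI * fiber_mean (S n) s)).
- by have := PI_RGT_0; lra.
- by move=> n; have [Hex _] := RInt_g2bar_curve (S n) ltac:(lia); exact: ex_RInt_scal Hex.
- move=> eps Heps; have [N HN] := eventually_div_INR_lt C eps Heps; exists N => n s Hn Hs.
  by rewrite Rabs_minus_sym; apply: Rle_lt_trans (HC (S n) s _ Hs) (HN n Hn); lia.
Qed.

Lemma LC_curve_error : exists C, forall m, (0 < m)%coq_nat ->
  Rabs (LC_curve k a e1 e2 m - LC_torus k a e1 e2) <= C / INR m.
Proof.
have [C HC] := section_integral_fiber_mean_error.
have PIpos := PI_RGT_0.
exists (C / (2 * PI)) => m Hm.
have HmR : 0 < INR m by exact: lt_0_INR.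
have [Hmean Hcurve] := RInt_g2bar_curve m Hm.
have -> : LC_curve k a e1 e2 m = / (2 * PI) * RInt (fiber_mean m) 0 (2 * PI).
  by rewrite /LC_curve Rint_RInt ?Hcurve //; exact: ex_RInt_g2bar_curve.
have -> : LC_torus k a e1 e2 = / (2 * PI) ^ 2 * RInt section_integral 0 (2 * PI).
  rewrite /LC_torus -(Rint_RInt _ _ _ ex_RInt_section_integral); do 2 f_equal.
  apply: functional_extensionality => s.
  exact: Rint_RInt (ex_RInt_g2bar_section s).
have Hscal := ex_RInt_scal _ 0 (2 * PI) (2 * PI) Hmean.
have Hdiff := RInt_minus _ _ 0 (2 * PI) Hscal ex_RInt_section_integral.
rewrite RInt_scal // in Hdiff.
have Hbound : Rabs (RInt (fun s => 2 * PI * fiber_mean m s - section_integral s) 0 (2 * PI))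
    <= (2 * PI - 0) * (C / INR m).
  apply: abs_RInt_le_const; first lra.
    exact: ex_RInt_minus Hscal ex_RInt_section_integral.
  by move=> s Hs; rewrite Rabs_minus_sym; apply: HC.
have Hpos : 0 < / (2 * PI) ^ 2 by apply: Rinv_0_lt_compat; apply: pow_lt; lra.
have -> : / (2 * PI) * RInt (fiber_mean m) 0 (2 * PI) - / (2 * PI) ^ 2 * RInt section_integral 0 (2 * PI)
    = / (2 * PI) ^ 2 * RInt (fun s => 2 * PI * fiber_mean m s - section_integral s) 0 (2 * PI).
  by rewrite Hdiff /minus /plus /opp /scal /= /mult /=; field; lra.
rewrite Rabs_mult Rabs_right; last lra.
apply: Rle_trans (Rmult_le_compat_l _ _ _ (Rlt_le _ _ Hpos) Hbound) _.
by right; field; lra.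
Qed.

End G2bar.

Theorem theorem3 (k : nat) (a : nat -> R) (e1 e2 : nat -> Z) :
  Un_cv (fun n => LC_curve k a e1 e2 (S n)) (LC_torus k a e1 e2).
Proof.
have [C HC] := LC_curve_error k a e1 e2.
move=> eps Heps; have [N HN] := eventually_div_INR_lt C eps Heps.
by exists N => n Hn; apply: Rle_lt_trans (HC (S n) ltac:(lia)) (HN n Hn).
Qed.
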